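(* Let $n,m\ge1$, let $H$ be a group, let $\sigma_{n+m}\colon G_{n+m}\to S_{n+m}$ and $\sigma_n\colon G_n\to S_n$ be surjective homomorphisms with kernels $P_{\sigma_{n+m}}$ and $P_{\sigma_n}$, let $f\colon P_{\sigma_{n+m}}\to P_{\sigma_n}$ be a surjective homomorphism, and let $\psi_m\colon H^{n+m}\to H^n$ be the projection onto the first $n$ factors. For $k\in\{n,n+m\}$ let $PW_k$ be the preimage of $P_{\sigma_k}$ under the projection $H^k\rtimes_{\sigma_k}G_k\to G_k$, identified with the direct product $H^k\times P_{\sigma_k}$. Then the homomorphism $(\psi_m,f)\colon PW_{n+m}\to PW_n$, $(\mathbf h,g)\mapsto(\psi_m(\mathbf h),f(g))$, admits a section (a homomorphism $s$ with $(\psi_m,f)\circ s=\mathrm{id}$) if and only if $f$ admits a section.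
   Context: For a surjective homomorphism $\tau\colon G\to S_k$, $H^k\rtimes_\tau G$ is the semidirect product in which $G$ acts on $H^k$ by permuting coordinates through $\tau$: $g\cdot(h_1,\dots,h_k)=(h_{\tau(g)(1)},\dots,h_{\tau(g)(k)})$ (as a left action). Since $\ker\tau$ acts trivially, the preimage of $\ker\tau$ in $H^k\rtimes_\tau G$ is the internal direct product $H^k\times\ker\tau$. *)

From mathcomp Require Import all_boot all_fingroup.
Set Implicit Arguments.
Unset Strict Implicit.
Unset Printing Implicit Defensive.

Record absgroup := AbsGroup {
  gcar :> Type;
  gmul : gcar -> gcar -> gcar;
  gone : gcar;
  ginv : gcar -> gcar;
  gmulA : forall x y z, gmul x (gmul y z) = gmul (gmul x y) z;
  gmul1 : forall x, gmul gone x = x;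
  gmulV : forall x, gmul (ginv x) x = gone
}.

Definition is_hom (A B : Type) (mA : A -> A -> A) (mB : B -> B -> B) (f : A -> B) :=
  forall x y, f (mA x y) = mB (f x) (f y).

Definition surj (A B : Type) (f : A -> B) := forall y, exists x, f x = y.

(* homomorphism G -> S_k, S_k = {perm 'I_k} with MathComp group law
   (s * t) x = t (s x). *)
Record shom (G : absgroup) (k : nat) := SHom {
  shfun :> G -> {perm 'I_k};
  shmorph : forall x y, shfun (gmul x y) = (shfun x * shfun y)%g
}.

Section Kernel.
Variables (G : absgroup) (k : nat) (s : shom G k).

Lemma shom1 : s (gone G) = 1%g.
Proof.
have := shmorph s (gone G) (gone G); rewrite gmul1 => E.
by apply: (@mulgI _ (s (gone G))); rewrite -E mulg1.
Qed.

Definition kcar := {g : G | s g == 1%g}.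

Lemma kmul_proof (x y : kcar) : s (gmul (val x) (val y)) == 1%g.
Proof. by rewrite shmorph (eqP (valP x)) (eqP (valP y)) mulg1. Qed.
Definition kmul (x y : kcar) : kcar := exist (fun g : G => s g == 1%g) _ (kmul_proof x y).

Lemma kone_proof : s (gone G) == 1%g. Proof. by rewrite shom1. Qed.
Definition kone : kcar := exist (fun g : G => s g == 1%g) _ kone_proof.

Lemma kinv_proof (x : kcar) : s (ginv (val x)) == 1%g.
Proof.
have := shmorph s (ginv (val x)) (val x).
by rewrite gmulV shom1 (eqP (valP x)) mulg1 => <-.
Qed.
Definition kinv (x : kcar) : kcar := exist (fun g : G => s g == 1%g) _ (kinv_proof x).

Lemma kmulA x y z : kmul x (kmul y z) = kmul (kmul x y) z.
Proof. by apply: val_inj; rewrite /= gmulA. Qed.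
Lemma kmul1 x : kmul kone x = x.
Proof. by apply: val_inj; rewrite /= gmul1. Qed.
Lemma kmulV x : kmul (kinv x) x = kone.
Proof. by apply: val_inj; rewrite /= gmulV. Qed.

Definition kernel : absgroup := AbsGroup kmulA kmul1 kmulV.

End Kernel.

Definition pow_car (H : absgroup) (k : nat) := 'I_k -> H.

Definition psi (H : absgroup) (n m : nat) (h : pow_car H (n + m)) : pow_car H n :=
  fun i => h (lshift m i).

Section Wreath.
Variables (H G : absgroup) (k : nat) (s : shom G k).

Definition act (g : G) (h : pow_car H k) : pow_car H k := fun i => h (s g i).

Definition sdmul (x y : pow_car H k * G) : pow_car H k * G :=
  (fun i => gmul (x.1 i) (act x.2 y.1 i), gmul x.2 y.2).

Definition PW := {x : pow_car H k * G | s x.2 == 1%g}.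

Lemma pwmul_proof (x y : PW) : s (sdmul (val x) (val y)).2 == 1%g.
Proof. by rewrite /= shmorph (eqP (valP x)) (eqP (valP y)) mulg1. Qed.
Definition pwmul (x y : PW) : PW := exist (fun x : pow_car H k * G => s x.2 == 1%g) _ (pwmul_proof x y).

(* identification PW_k = H^k x P_s *)
Definition pw_h (x : PW) : pow_car H k := (val x).1.
Definition pw_g (x : PW) : kernel s := exist (fun g : G => s g == 1%g) (val x).2 (valP x).

End Wreath.

Definition psif (H G1 G2 : absgroup) (n m : nat) (s1 : shom G1 (n + m)) (s2 : shom G2 n)
  (f : kernel s1 -> kernel s2) (x : PW H s1) : PW H s2 :=
  exist (fun y : pow_car H n * G2 => s2 y.2 == 1%g) (psi (pw_h x), val (f (pw_g x))) (valP (f (pw_g x))).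

(* Since ker s acts trivially on H^k, PW_k is the direct product H^k x ker s, and (psi_m, f)
   is the product of the split surjection psi_m (split by padding with ones) and f.
   A section of f extends to one of (psi_m, f) by taking the product with the padding map;
   conversely a section of (psi_m, f), restricted to the factor ker s2 and followed by the
   projection onto ker s1, is a section of f. *)

From Pilot Require Import Defs.
From mathcomp Require Import all_boot all_fingroup.
From Stdlib Require Import FunctionalExtensionality.

Set Implicit Arguments.
Unset Strict Implicit.
Unset Printing Implicit Defensive.

Definition powc_mul (H : absgroup) (k : nat) (h h' : pow_car H k) : pow_car H k :=
  fun i => gmul (h i) (h' i).

Definition powc_one (H : absgroup) (k : nat) : pow_car H k := fun _ => gone H.
Arguments powc_one {H} k.

Lemma powc_mul1 (H : absgroup) (k : nat) (h : pow_car H k) : powc_mul (powc_one k) h = h.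
Proof. by apply: functional_extensionality => i; rewrite /powc_mul gmul1. Qed.

Definition pad_one (H : absgroup) (n m : nat) (h : pow_car H n) : pow_car H (n + m) :=
  fun i => if split i is inl j then h j else gone H.
Arguments pad_one {H n} m h.

Lemma psi_pad_one (H : absgroup) (n m : nat) (h : pow_car H n) : psi (pad_one m h) = h.
Proof.
by apply: functional_extensionality => i; rewrite /psi /pad_one (unsplitK (inl _ i)).
Qed.

Lemma pad_one_mul (H : absgroup) (n m : nat) (h h' : pow_car H n) :
  pad_one m (powc_mul h h') = powc_mul (pad_one m h) (pad_one m h').
Proof.
apply: functional_extensionality => i; rewrite /pad_one /powc_mul.
by case: (split i) => // _; rewrite gmul1.
Qed.

Section WreathKernel.
Variables (H G : absgroup) (k : nat) (s : shom G k).

Lemma act_kernel (g : G) (h : pow_car H k) : s g == 1%g -> Defs.act s g h = h.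
Proof.
by move=> /eqP sg1; apply: functional_extensionality => i; rewrite /Defs.act sg1 perm1.
Qed.

Definition pw_pair (h : pow_car H k) (g : kernel s) : PW H s :=
  exist (fun x : pow_car H k * G => s x.2 == 1%g) (h, val g) (valP g).

Lemma pw_h_pair (h : pow_car H k) (g : kernel s) : pw_h (pw_pair h g) = h.
Proof. by []. Qed.

Lemma pw_g_pair (h : pow_car H k) (g : kernel s) : pw_g (pw_pair h g) = g.
Proof. exact: val_inj. Qed.

Lemma pw_pairK (x : PW H s) : pw_pair (pw_h x) (pw_g x) = x.
Proof. by case: x => [[h g] sg1]; apply: val_inj. Qed.

Lemma pw_h_mul (x y : PW H s) : pw_h (pwmul x y) = powc_mul (pw_h x) (pw_h y).
Proof. by rewrite /pw_h /= act_kernel //; case: x => [[h g] sg1]. Qed.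

Lemma pw_g_mul (x y : PW H s) : pw_g (pwmul x y) = gmul (pw_g x) (pw_g y).
Proof. exact: val_inj. Qed.

Lemma pwmul_pair (h h' : pow_car H k) (g g' : kernel s) :
  pwmul (pw_pair h g) (pw_pair h' g') = pw_pair (powc_mul h h') (gmul g g').
Proof. by rewrite -[LHS]pw_pairK pw_h_mul pw_g_mul !pw_h_pair !pw_g_pair. Qed.

End WreathKernel.

Lemma psif_pair (H G1 G2 : absgroup) (n m : nat) (s1 : shom G1 (n + m)) (s2 : shom G2 n)
    (f : kernel s1 -> kernel s2) (h : pow_car H (n + m)) (g : kernel s1) :
  psif f (pw_pair h g) = pw_pair (psi h) (f g).
Proof. by apply: val_inj; rewrite /= (pw_g_pair h g). Qed.

Lemma pw_g_psif (H G1 G2 : absgroup) (n m : nat) (s1 : shom G1 (n + m)) (s2 : shom G2 n)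
    (f : kernel s1 -> kernel s2) (x : PW H s1) :
  pw_g (psif f x) = f (pw_g x).
Proof. exact: val_inj. Qed.

Theorem proposition5p21 (n m : nat) (Hn : 1 <= n) (Hm : 1 <= m)
  (H G1 G2 : absgroup) (s1 : shom G1 (n + m)) (s2 : shom G2 n)
  (s1surj : surj s1) (s2surj : surj s2)
  (f : kernel s1 -> kernel s2)
  (fhom : is_hom (@gmul (kernel s1)) (@gmul (kernel s2)) f)
  (fsurj : surj f) :
  (exists s : PW H s2 -> PW H s1,
     is_hom (@pwmul H G2 n s2) (@pwmul H G1 (n + m) s1) s /\
     forall x, psif f (s x) = x)
  <->
  (exists t : kernel s2 -> kernel s1,
     is_hom (@gmul (kernel s2)) (@gmul (kernel s1)) t /\
     forall x, f (t x) = x).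
Proof.
split=> [[s [s_hom sK]] | [t [t_hom tK]]].
- exists (fun g => pw_g (s (pw_pair (powc_one n) g))); split.
  + by move=> a b; rewrite -pw_g_mul -s_hom pwmul_pair powc_mul1.
  + by move=> g; rewrite -pw_g_psif sK pw_g_pair.
- exists (fun x => pw_pair (pad_one m (pw_h x)) (t (pw_g x))); split.
  + by move=> x y; rewrite pwmul_pair pw_h_mul pw_g_mul pad_one_mul t_hom.
  + by move=> x; rewrite psif_pair psi_pad_one tK pw_pairK.
Qed.
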